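(* Let $\mathcal{X}$ be a finite set, $\mathcal{Y}=\{-1,1\}$, and $P_{X,Y}$ the empirical distribution of $n$ samples $\{(x_i,y_i)\}_{i=1}^n$ with $P_Y(-1)=P_Y(1)=\frac12$. Let $f:\mathcal{X}\to\mathbb{R}^d$ and $\lambda>0$. Define $\tilde L_{\mathsf{SVM}}(f;\lambda) = 1-\frac{1}{2\lambda}\left\|\mathbb{E}[f(X)Y]\right\|^2$, $M = \max_{x\in\mathcal{X}}\|\tilde f(x)\|$ with $\tilde f(x)=f(x)-\mathbb{E}[f(X)]$, and $\lambda_{\mathrm T} = M\left\|\mathbb{E}[f(X)Y]\right\|$. Then $$\tilde L_{\mathsf{SVM}}(f;\lambda)\le L^*_{\mathsf{SVM}}(f;\lambda)\le \tilde L_{\mathsf{SVM}}(f;\lambda) + \left(\frac{\lambda_{\mathrm T}}{\lambda}-1\right)^+ .$$ Moreover, when $\lambda\ge\lambda_{\mathrm T}$, $L^*_{\mathsf{SVM}}(f;\lambda) = \tilde L_{\mathsf{SVM}}(f;\lambda)$, which is achieved by $w_{\mathsf{SVM}} = \frac1\lambda\mathbb{E}[f(X)Y]$, $b_{\mathsf{SVM}} = -\langle w_{\mathsf{SVM}},\mathbb{E}[f(X)]\rangle$, and the resulting SVM prediction is $$\hat y_{\mathsf{SVM}}(x;f,\lambda) = \mathrm{sign}\left(\left\langle\mathbb{E}[\tilde f(X)Y],\tilde f(x)\right\rangle\right) = \arg\min_{y\in\mathcal{Y}}\left\|f(x)-\mathbb{E}[f(X)\mid Y=y]\right\|.$$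
   Context: Expectations are with respect to $P_{X,Y}$, where $P_{X,Y}(x,y)=\frac1n\sum_{i=1}^n\mathbb{1}\{x_i=x,y_i=y\}$. $x^+=\max\{0,x\}$. The hinge loss is $\ell_{\mathrm{hinge}}(y,z)=(1-yz)^+$. For $w\in\mathbb{R}^d$, $b\in\mathbb{R}$, the SVM loss is $L_{\mathsf{SVM}}(f,w,b;\lambda) = \mathbb{E}[\ell_{\mathrm{hinge}}(Y,\langle w,f(X)\rangle+b)] + \frac\lambda2\|w\|^2$; $(w_{\mathsf{SVM}},b_{\mathsf{SVM}})$ denotes a minimizer, $L^*_{\mathsf{SVM}}(f;\lambda)$ the minimum value, and the SVM prediction is $\hat y_{\mathsf{SVM}}(x;f,\lambda) = \mathrm{sign}(\langle w_{\mathsf{SVM}},f(x)\rangle + b_{\mathsf{SVM}})$. *)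

From HB Require Import structures.
From mathcomp Require Import all_boot all_order all_algebra.
From mathcomp Require Import all_classical all_reals.
Set Implicit Arguments. Unset Strict Implicit. Unset Printing Implicit Defensive.
Import Order.TTheory GRing.Theory Num.Theory.
Local Open Scope ring_scope.
Local Open Scope classical_set_scope.

Section SVM.
Variable R : realType.
Variable X : finType.
Variables n d : nat.
Variable xs : 'I_n -> X.
Variable ys : 'I_n -> R.
Variable f : X -> 'rV[R]_d.

Definition dotv (u v : 'rV[R]_d) : R := \sum_(k < d) u 0 k * v 0 k.
Definition normv (u : 'rV[R]_d) : R := Num.sqrt (dotv u u).

Definition Exp (g : X -> R -> R) : R := n%:R^-1 * \sum_(i < n) g (xs i) (ys i).
Definition ExpV (g : X -> R -> 'rV[R]_d) : 'rV[R]_d :=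
  n%:R^-1 *: \sum_(i < n) g (xs i) (ys i).

Definition PY (y : R) : R := n%:R^-1 * #|[set i : 'I_n | ys i == y]|%:R.

Definition condExpf (y : R) : 'rV[R]_d :=
  #|[set i : 'I_n | ys i == y]|%:R^-1 *: \sum_(i < n | ys i == y) f (xs i).

Definition Ef : 'rV[R]_d := ExpV (fun x _ => f x).
Definition ftilde (x : X) : 'rV[R]_d := f x - Ef.

Definition EfY : 'rV[R]_d := ExpV (fun x y => y *: f x).
Definition EftY : 'rV[R]_d := ExpV (fun x y => y *: ftilde x).

Definition hinge (y z : R) : R := Num.max 0 (1 - y * z).

Definition L_SVM (lambda : R) (w : 'rV[R]_d) (b : R) : R :=
  Exp (fun x y => hinge y (dotv w (f x) + b)) + lambda / 2 * normv w ^+ 2.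

Definition Lstar_SVM (lambda : R) : R :=
  inf (range (fun wb : 'rV[R]_d * R => L_SVM lambda wb.1 wb.2)).

Definition Ltilde_SVM (lambda : R) : R := 1 - (2 * lambda)^-1 * normv EfY ^+ 2.

Definition Mmax : R := \big[Num.max/0]_(x : X) normv (ftilde x).
Definition lambdaT : R := Mmax * normv EfY.

Definition yhat (w : 'rV[R]_d) (b : R) (x : X) : R := Num.sg (dotv w (f x) + b).

Definition unique_argmin_Y (x : X) (y : R) : Prop :=
  (y = 1 \/ y = -1) /\
  forall y', (y' = 1 \/ y' = -1) -> y' <> y ->
    normv (f x - condExpf y) < normv (f x - condExpf y').

End SVM.

From HB Require Import structures.
From mathcomp Require Import all_boot all_order all_algebra.
From mathcomp Require Import all_classical all_reals.
From mathcomp Require Import ring lra.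
Import Order.TTheory GRing.Theory Num.Theory.
Local Open Scope ring_scope.

(* The hinge loss dominates its linearisation 1 - y z, and since E[Y] = 0 the bias drops out of
   the linearised risk, which becomes 1 - <w, E[f(X)Y]>; adding the ridge term and minimising
   over w (Young's inequality) gives the lower bound Ltilde.  At w = E[f(X)Y] / lambda, with b
   centring the features, Cauchy-Schwarz bounds every margin y <w, ftilde x> by lambda_T / lambda,
   so the hinge exceeds its linearisation by at most (lambda_T / lambda - 1)^+: this gives the
   upper bound, and equality when lambda >= lambda_T.  Finally the class means are
   E[f(X)] +- E[f(X)Y], so the sign of <E[f(X)Y], ftilde x> tells which of them is nearer f x. *)

Section InnerProduct.
Context {R : realType} {d : nat}.
Implicit Types (u v w : 'rV[R]_d) (c : R).

Lemma dotvC u v : dotv u v = dotv v u.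
Proof. by apply: eq_bigr => k _; rewrite mulrC. Qed.

Lemma dotvDr u v w : dotv u (v + w) = dotv u v + dotv u w.
Proof. by rewrite /dotv -big_split; apply: eq_bigr => k _; rewrite mxE mulrDr. Qed.

Lemma dotvZr u v c : dotv u (c *: v) = c * dotv u v.
Proof. by rewrite /dotv mulr_sumr; apply: eq_bigr => k _; rewrite mxE mulrCA. Qed.

Lemma dotvNr u v : dotv u (- v) = - dotv u v.
Proof. by rewrite -scaleN1r dotvZr mulN1r. Qed.

Lemma dotvBr u v w : dotv u (v - w) = dotv u v - dotv u w.
Proof. by rewrite dotvDr dotvNr. Qed.

Lemma dotvDl u v w : dotv (u + v) w = dotv u w + dotv v w.
Proof. by rewrite dotvC dotvDr !(dotvC w). Qed.

Lemma dotvZl u v c : dotv (c *: u) v = c * dotv u v.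
Proof. by rewrite dotvC dotvZr dotvC. Qed.

Lemma dotvNl u v : dotv (- u) v = - dotv u v.
Proof. by rewrite dotvC dotvNr dotvC. Qed.

Lemma dotv0l v : dotv 0 v = 0.
Proof. by rewrite -(scale0r 0) dotvZl mul0r. Qed.

Lemma dotv0r u : dotv u 0 = 0.
Proof. by rewrite dotvC dotv0l. Qed.

Lemma dotv_sumr u I (r : seq I) (P : pred I) (F : I -> 'rV[R]_d) :
  dotv u (\sum_(i <- r | P i) F i) = \sum_(i <- r | P i) dotv u (F i).
Proof.
by elim/big_rec2: _ => [|i x y _ <-]; rewrite ?dotv0r ?dotvDr.
Qed.

Lemma dotvvD u v : dotv (u + v) (u + v) = dotv u u + 2 * dotv u v + dotv v v.
Proof. by rewrite !(dotvDl, dotvDr) (dotvC v u); ring. Qed.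

Lemma dotvvB u v : dotv (u - v) (u - v) = dotv u u - 2 * dotv u v + dotv v v.
Proof. by rewrite dotvvD dotvNr dotvNl dotvNr opprK; ring. Qed.

Lemma dotvv_ge0 u : 0 <= dotv u u.
Proof. by apply: sumr_ge0 => k _; rewrite -expr2 sqr_ge0. Qed.

Lemma dotvv_eq0 u : (dotv u u == 0) = (u == 0).
Proof.
rewrite psumr_eq0 => [|k _]; last by rewrite -expr2 sqr_ge0.
apply/allP/eqP => [u0|-> k _]; last by rewrite mxE mulr0 eqxx.
apply/rowP => k; rewrite mxE.
by have /(_ (mem_index_enum k)) := u0 k; rewrite mulf_eq0 orbb => /eqP.
Qed.

Lemma normv_ge0 u : 0 <= normv u.
Proof. exact: sqrtr_ge0. Qed.

Lemma sqr_normv u : normv u ^+ 2 = dotv u u.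
Proof. by rewrite sqr_sqrtr // dotvv_ge0. Qed.

Lemma normv_gt0 u : (0 < normv u) = (u != 0).
Proof. by rewrite sqrtr_gt0 lt0r dotvv_eq0 dotvv_ge0 andbT. Qed.

Lemma normvZ c u : normv (c *: u) = `|c| * normv u.
Proof. by rewrite /normv dotvZl dotvZr mulrA -expr2 sqrtrM ?sqr_ge0 // sqrtr_sqr. Qed.

Lemma normv_lt u v : (normv u < normv v) = (dotv u u < dotv v v).
Proof. by rewrite -!sqr_normv ltr_pXn2r // nnegrE normv_ge0. Qed.

Lemma cauchy_schwarz u v : dotv u v <= normv u * normv v.
Proof.
have [->|u0] := eqVneq u 0; first by rewrite dotv0l mulr_ge0 ?normv_ge0.
have [->|v0] := eqVneq v 0; first by rewrite dotv0r mulr_ge0 ?normv_ge0.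
set p := normv u; set q := normv v.
have pq_gt0 : 0 < p * q by rewrite mulr_gt0 ?normv_gt0.
have := dotvv_ge0 (q *: u - p *: v).
rewrite dotvvB !(dotvZl, dotvZr) -!sqr_normv -/p -/q => expand_ge0.
by rewrite -(ler_pM2l pq_gt0); nra.
Qed.

Lemma young_dotv u v {l : R} : 0 < l ->
  dotv u v <= l / 2 * dotv u u + (2 * l)^-1 * dotv v v.
Proof.
move=> l_gt0; have l2_gt0 : 0 < 2 * l by rewrite mulr_gt0.
have := dotvv_ge0 (l *: u - v); rewrite dotvvB !(dotvZl, dotvZr) => expand_ge0.
rewrite -(ler_pM2l l2_gt0).
have -> : 2 * l * (l / 2 * dotv u u + (2 * l)^-1 * dotv v v) =
          l ^+ 2 * dotv u u + dotv v v by field; rewrite gt_eqF.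
lra.
Qed.

Lemma normvB_lt_normvD u v : (normv (u - v) < normv (u + v)) = (0 < dotv v u).
Proof.
rewrite normv_lt dotvvB dotvvD dotvC.
by apply/idP/idP => ineq; lra.
Qed.

Lemma normvD_lt_normvB u v : (normv (u + v) < normv (u - v)) = (dotv v u < 0).
Proof. by rewrite -[in u + v](opprK v) normvB_lt_normvD dotvNl oppr_gt0. Qed.

End InnerProduct.

Section EmpiricalExpectation.
Context {R : realType} {X : finType} {n d : nat}.
Variables (xs : 'I_n -> X) (ys : 'I_n -> R).
Implicit Types (g h : X -> R -> R).

Lemma ler_Exp g h :
  (forall i, g (xs i) (ys i) <= h (xs i) (ys i)) -> Exp xs ys g <= Exp xs ys h.
Proof. by move=> gh; rewrite ler_wpM2l ?invr_ge0 ?ler0n // ler_sum. Qed.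

Lemma Exp_cstB (k : R) g : n%:R != 0 :> R ->
  Exp xs ys (fun x y => k - g x y) = k - Exp xs ys g.
Proof.
move=> n0; rewrite /Exp sumrB sumr_const card_ord mulrBr.
by rewrite -[k *+ n]mulr_natr mulrCA mulVf ?mulr1.
Qed.

Lemma Exp_label_affine (w : 'rV[R]_d) (b : R) (F : X -> 'rV[R]_d) :
  Exp xs ys (fun x y => y * (dotv w (F x) + b)) =
  dotv w (ExpV xs ys (fun x y => y *: F x)) + b * Exp xs ys (fun _ y => y).
Proof.
rewrite /Exp /ExpV dotvZr dotv_sumr mulrCA -mulrDr [b * _]mulr_sumr -big_split /=.
by congr (_ * _); apply: eq_bigr => i _; rewrite dotvZr mulrDr [b * _]mulrC.
Qed.

End EmpiricalExpectation.

Lemma sum_label_card {R : realType} {n : nat} (ys : 'I_n -> R) (y : R) :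
  \sum_(i | ys i == y) (1 : R) = #|[set i | ys i == y]%classic|%:R.
Proof.
rewrite sumr_const; congr (_ *+ _); apply: eq_card => i.
by apply/idP/idP => [/mem_set|/set_mem].
Qed.

Lemma ltrN11 (R : numDomainType) : (-1 : R) < 1.
Proof. exact: lt_trans (ltrN10 R) ltr01. Qed.

Section BalancedSample.
Context {R : realType} {X : finType} {n d : nat}.
Variables (xs : 'I_n -> X) (ys : 'I_n -> R) (f : X -> 'rV[R]_d).
Hypothesis ys_pm1 : forall i, ys i = 1 \/ ys i = -1.
Hypothesis PY1 : PY ys 1 = 1 / 2.
Hypothesis PYN1 : PY ys (-1) = 1 / 2.

Lemma sum_by_label {V : zmodType} (F : 'I_n -> V) :
  \sum_i F i = \sum_(i | ys i == 1) F i + \sum_(i | ys i == -1) F i.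
Proof.
rewrite (bigID (fun i => ys i == 1)) /=; congr (_ + _); apply: eq_bigl => i.
by case: (ys_pm1 i) => ->; rewrite eqxx ?(gt_eqF (ltrN11 R)) ?(lt_eqF (ltrN11 R)).
Qed.

Lemma sum_label_scale (F : 'I_n -> 'rV[R]_d) :
  \sum_i ys i *: F i = \sum_(i | ys i == 1) F i - \sum_(i | ys i == -1) F i.
Proof.
rewrite sum_by_label -sumrN; congr (_ + _).
  by apply: eq_bigr => i /eqP ->; rewrite scale1r.
by apply: eq_bigr => i /eqP ->; rewrite scaleN1r.
Qed.

Lemma sample_size_neq0 : n%:R != 0 :> R.
Proof.
by apply: contra_eq_neq PY1 => n0; rewrite /PY n0 invr0 mul0r; lra.
Qed.

Lemma card_label y :
  PY ys y = 1 / 2 -> #|[set i | ys i == y]%classic|%:R = (n%:R / 2 : R).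
Proof.
by rewrite /PY => PYy; rewrite -[LHS](mulVKf sample_size_neq0) PYy mul1r mulrC.
Qed.

Lemma sum_label_eq0 : \sum_i ys i = 0.
Proof.
rewrite sum_by_label (eq_bigr (fun _ => 1)) => [|i /eqP //].
rewrite [X in _ + X](eq_bigr (fun _ => -1)) => [|i /eqP //].
by rewrite sumrN !sum_label_card !card_label // subrr.
Qed.

Lemma Exp_label_eq0 : Exp xs ys (fun _ y => y) = 0.
Proof. by rewrite /Exp sum_label_eq0 mulr0. Qed.

Lemma EftY_EfY : EftY xs ys f = EfY xs ys f.
Proof.
rewrite /EftY /EfY /ExpV /ftilde; congr (_ *: _).
under eq_bigr do rewrite scalerBr.
by rewrite sumrB -scaler_suml sum_label_eq0 scale0r subr0.
Qed.

Lemma condExpf_label :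
  condExpf xs ys f 1 = Ef xs ys f + EfY xs ys f /\
  condExpf xs ys f (-1) = Ef xs ys f - EfY xs ys f.
Proof.
rewrite /condExpf !card_label // /Ef /EfY /ExpV sum_label_scale.
rewrite (sum_by_label (fun i => f (xs i))).
by split; apply/rowP => k; rewrite !mxE; field; rewrite sample_size_neq0.
Qed.

End BalancedSample.

Lemma hinge_ge {R : realType} {y z : R} : 1 - y * z <= hinge y z.
Proof. by rewrite le_max lexx orbT. Qed.

Lemma hinge_le_slack {R : realType} {y z c : R} :
  0 <= c -> y * z <= 1 + c -> hinge y z <= 1 + c - y * z.
Proof. by rewrite ge_max => c_ge0 yz_le; apply/andP; split; lra. Qed.

Section SVMLoss.
Context {R : realType} {X : finType} {n d : nat}.
Variables (xs : 'I_n -> X) (ys : 'I_n -> R) (f : X -> 'rV[R]_d) (l : R).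

Lemma L_SVM_ge0 w b : 0 <= l -> 0 <= L_SVM xs ys f l w b.
Proof.
move=> l_ge0; rewrite /L_SVM /Exp addr_ge0 ?mulr_ge0 ?invr_ge0 ?ler0n ?normv_ge0 //.
by rewrite sumr_ge0 // => i _; rewrite le_max lexx.
Qed.

Lemma Lstar_SVM_le w b : 0 <= l -> Lstar_SVM xs ys f l <= L_SVM xs ys f l w b.
Proof.
move=> l_ge0; apply: ge_inf; last by exists (w, b).
by exists 0 => _ [wb _ <-]; exact: L_SVM_ge0.
Qed.

Lemma le_Lstar_SVM c :
  (forall w b, c <= L_SVM xs ys f l w b) -> c <= Lstar_SVM xs ys f l.
Proof.
move=> lb; apply: lb_le_inf; first by exists (L_SVM xs ys f l 0 0), (0, 0).
by move=> _ [wb _ <-]; exact: lb.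
Qed.

Lemma unique_argmin_Y_pm1 x y : y = 1 \/ y = -1 ->
  unique_argmin_Y xs ys f x y <->
  normv (f x - condExpf xs ys f y) < normv (f x - condExpf xs ys f (- y)).
Proof.
have N1_neq1 : (-1 : R) <> 1 by move/eqP; rewrite lt_eqF ?ltrN11.
move=> y_pm1; split => [[_ closer]|closer]; last split => // y' y'_pm1 y'_neq_y.
  by apply: closer; case: y_pm1 => ->; rewrite ?opprK; auto.
by have -> : y' = - y by case: y_pm1 y'_pm1 y'_neq_y => -> [] ->; rewrite ?opprK.
Qed.

End SVMLoss.

Section HingeRisk.
Context {R : realType} {X : finType} {n d : nat}.
Variables (xs : 'I_n -> X) (ys : 'I_n -> R) (f : X -> 'rV[R]_d) (l : R).
Hypothesis l_gt0 : 0 < l.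
Hypothesis size_neq0 : n%:R != 0 :> R.
Hypothesis Exp_label0 : Exp xs ys (fun _ y => y) = 0.

Lemma Exp_hinge_ge w b :
  1 - dotv w (EfY xs ys f) <= Exp xs ys (fun x y => hinge y (dotv w (f x) + b)).
Proof.
set z := fun x => dotv w (f x) + b.
have := ler_Exp xs ys (fun x y => 1 - y * z x) (fun x y => hinge y (z x))
  (fun i => hinge_ge).
by rewrite Exp_cstB // Exp_label_affine Exp_label0 mulr0 addr0.
Qed.

Lemma Ltilde_le_L_SVM w b : Ltilde_SVM xs ys f l <= L_SVM xs ys f l w b.
Proof.
have := Exp_hinge_ge w b; have := young_dotv w (EfY xs ys f) l_gt0.
by rewrite /L_SVM /Ltilde_SVM !sqr_normv; lra.
Qed.

Hypothesis ys_pm1 : forall i, ys i = 1 \/ ys i = -1.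

Lemma label_margin_le w i :
  ys i * (dotv w (f (xs i)) - dotv w (Ef xs ys f)) <= normv w * Mmax xs ys f.
Proof.
rewrite -dotvBr -dotvZr; apply: le_trans (cauchy_schwarz _ _) _.
rewrite normvZ; have -> : `|ys i| = 1 by case: (ys_pm1 i) => ->; rewrite ?normrN normr1.
by rewrite mul1r ler_wpM2l ?normv_ge0 // /Mmax (le_bigmax _ (fun x => normv (ftilde xs ys f x))).
Qed.

Lemma Exp_hinge_centered_le w :
  Exp xs ys (fun x y => hinge y (dotv w (f x) - dotv w (Ef xs ys f))) <=
  1 + Num.max 0 (normv w * Mmax xs ys f - 1) - dotv w (EfY xs ys f).
Proof.
set c := Num.max 0 _; set z := fun x => dotv w (f x) - dotv w (Ef xs ys f).
have c_ge0 : 0 <= c by rewrite le_max lexx.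
have slack : normv w * Mmax xs ys f <= 1 + c by rewrite -lerBlDl le_max lexx orbT.
have := ler_Exp xs ys (fun x y => hinge y (z x)) (fun x y => 1 + c - y * z x)
  (fun i => hinge_le_slack c_ge0 (le_trans (label_margin_le w i) slack)).
by rewrite Exp_cstB // Exp_label_affine Exp_label0 mulr0 addr0.
Qed.

Lemma L_SVM_mean_classifier_le (w := l^-1 *: EfY xs ys f) :
  L_SVM xs ys f l w (- dotv w (Ef xs ys f)) <=
  Ltilde_SVM xs ys f l + Num.max 0 (lambdaT xs ys f / l - 1).
Proof.
have := Exp_hinge_centered_le w.
have -> : normv w * Mmax xs ys f = lambdaT xs ys f / l.
  by rewrite normvZ ger0_norm ?invr_ge0 ?ltW // /lambdaT; field; rewrite gt_eqF.
have ww : dotv w w = l^-1 * (l^-1 * dotv (EfY xs ys f) (EfY xs ys f)).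
  by rewrite dotvZl dotvZr.
have wa : dotv w (EfY xs ys f) = l^-1 * dotv (EfY xs ys f) (EfY xs ys f).
  by rewrite dotvZl.
rewrite /L_SVM /Ltilde_SVM !sqr_normv ww wa.
set aa := dotv (EfY xs ys f) (EfY xs ys f); set c := Num.max 0 _.
have -> : l / 2 * (l^-1 * (l^-1 * aa)) = (2 * l)^-1 * aa by field; rewrite gt_eqF.
have -> : l^-1 * aa = 2 * ((2 * l)^-1 * aa) by field; rewrite gt_eqF.
lra.
Qed.

End HingeRisk.

Section Prediction.
Context {R : realType} {X : finType} {n d : nat}.
Variables (xs : 'I_n -> X) (ys : 'I_n -> R) (f : X -> 'rV[R]_d) (l : R).
Hypothesis l_gt0 : 0 < l.
Hypothesis ys_pm1 : forall i, ys i = 1 \/ ys i = -1.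
Hypothesis PY1 : PY ys 1 = 1 / 2.
Hypothesis PYN1 : PY ys (-1) = 1 / 2.

Let w := l^-1 *: EfY xs ys f.
Let b := - dotv w (Ef xs ys f).

Lemma yhat_mean_classifier x : yhat f w b x = Num.sg (dotv (EftY xs ys f) (ftilde xs ys f x)).
Proof.
rewrite /yhat /b -dotvBr /w dotvZl sgrM gtr0_sg ?invr_gt0 // mul1r.
by rewrite EftY_EfY.
Qed.

Lemma yhat_mean_classifier_argmin x y : y = 1 \/ y = -1 ->
  yhat f w b x = y <-> unique_argmin_Y xs ys f x y.
Proof.
move=> y_pm1; rewrite yhat_mean_classifier EftY_EfY // unique_argmin_Y_pm1 //.
have [cond1 condN1] := condExpf_label xs ys f ys_pm1 PY1 PYN1.
have closer1 : f x - condExpf xs ys f 1 = ftilde xs ys f x - EfY xs ys f.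
  by rewrite cond1 opprD addrA.
have closerN1 : f x - condExpf xs ys f (-1) = ftilde xs ys f x + EfY xs ys f.
  by rewrite condN1 opprB addrA addrAC.
case: y_pm1 => ->; rewrite ?opprK closer1 closerN1.
  by rewrite normvB_lt_normvD -[0 < _]sgr_cp0; exact: (rwP eqP).
by rewrite normvD_lt_normvB -[_ < 0]sgr_cp0; exact: (rwP eqP).
Qed.

End Prediction.

Theorem theorem1 (R : realType) (X : finType) (n d : nat)
  (xs : 'I_n -> X) (ys : 'I_n -> R) (f : X -> 'rV[R]_d) (lambda : R) :
  (forall i, ys i = 1 \/ ys i = -1) ->
  PY ys 1 = 1 / 2 -> PY ys (-1) = 1 / 2 ->
  0 < lambda ->
  let Lt := Ltilde_SVM xs ys f lambda in
  let Ls := Lstar_SVM xs ys f lambda in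
  let lT := lambdaT xs ys f in
  (Lt <= Ls /\ Ls <= Lt + Num.max 0 (lT / lambda - 1)) /\
  (lT <= lambda ->
    let w := lambda^-1 *: EfY xs ys f in
    let b := - dotv w (Ef xs ys f) in
    Ls = Lt /\ L_SVM xs ys f lambda w b = Lt /\
    forall x : X,
      yhat f w b x = Num.sg (dotv (EftY xs ys f) (ftilde xs ys f x)) /\
      (forall y : R, y = 1 \/ y = -1 ->
         (yhat f w b x = y <-> unique_argmin_Y xs ys f x y))).
Proof.
move=> ys_pm1 PY1 PYN1 l_gt0 Lt Ls lT.
have size_neq0 := sample_size_neq0 ys PY1.
have Exp_label0 := Exp_label_eq0 xs ys ys_pm1 PY1 PYN1.
have Lt_le_L := Ltilde_le_L_SVM xs ys f lambda l_gt0 size_neq0 Exp_label0.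
have L_mean_le := L_SVM_mean_classifier_le xs ys f lambda l_gt0 size_neq0 Exp_label0 ys_pm1.
have Ls_le w b : Ls <= L_SVM xs ys f lambda w b by apply/Lstar_SVM_le/ltW.
have Lt_le_Ls : Lt <= Ls by apply: le_Lstar_SVM.
split; first by split; last exact: le_trans (Ls_le _ _) L_mean_le.
move=> lT_le w b.
have no_slack : Num.max 0 (lT / lambda - 1) = 0.
  by apply/max_idPl; rewrite subr_le0 ler_pdivrMr // mul1r.
have L_opt : L_SVM xs ys f lambda w b = Lt.
  by apply/le_anti; rewrite Lt_le_L andbT -[Lt]addr0 -no_slack.
split; first by apply/le_anti; rewrite Lt_le_Ls andbT -L_opt Ls_le.
split=> // x; split; first exact: yhat_mean_classifier.
by move=> y; exact: yhat_mean_classifier_argmin.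
Qed.
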